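(* In the process algebra $\mathcal{G}$ described in the context, for all $\mathbb{P}_u,\mathbb{P}_v,\mathbb{P},\mathbb{Q}$ (as defined in the context) and all $W\in\mathcal{W}$: (1) $D\simeq D\|G_u\mathbb{P}_u\simeq D\|G_v'\mathbb{P}_v\mathbb{P}_u\simeq D\|Z\mathbb{P}_v\mathbb{P}_u\simeq D\|\mathbb{P}_v\mathbb{P}_u\simeq D\|W\mathbb{P}_v\mathbb{P}_u$; (2) $C\simeq C\|G\mathbb{P}\simeq C\|\mathbb{P}\simeq C\|W\mathbb{P}\simeq C\|G_v\mathbb{P}_v$; (3) $C'\simeq C'\|G'\mathbb{Q}\simeq C'\|G_v\mathbb{Q}\simeq C'\|Z\mathbb{Q}\simeq C'\|\mathbb{Q}$.
   Context: Process algebras: a triple $(\mathcal{C},\mathcal{A},\Delta)$ of finitely many constants, actions (including silent $\tau$) and rules $X\stackrel{\ell}{\longrightarrow}P$. Processes: $P::=\epsilon\mid X\mid PP'\mid P\|P'$, sequential composition associative, parallel composition associative and commutative, $\epsilon$ a unit for both. Semantics: rules of $\Delta$; if $P\stackrel{\ell}{\longrightarrow}P'$ then $PQ\stackrel{\ell}{\longrightarrow}P'Q$, $P\|Q\stackrel{\ell}{\longrightarrow}P'\|Q$, $Q\|P\stackrel{\ell}{\longrightarrow}Q\|P'$. $\Longrightarrow$ is the reflexive transitive closure of $\stackrel{\tau}{\longrightarrow}$. Branching bisimilarity $\simeq$ is the largest relation $\mathcal{B}$ such that whenever $P\mathcal{B}Q$ and $P\stackrel{\ell}{\longrightarrow}P'$,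 either $Q\Longrightarrow Q''\stackrel{\ell}{\longrightarrow}Q'$ with $P\mathcal{B}Q''$ and $P'\mathcal{B}Q'$, or $\ell=\tau$ and $P'\mathcal{B}Q$; and symmetrically. The algebra $\mathcal{G}$: fix a finite alphabet $\Sigma$ with $|\Sigma|\ge2$ and a Post Correspondence instance $\mathrm{INST}=\{(u_1,v_1),\dots,(u_n,v_n)\}$ with $u_k,v_k\in\Sigma^{+}$; let $\mathcal{N}=\{1,\dots,n\}$. Actions: $\{\lambda_U,\lambda_V,\lambda_D,\lambda_I,\lambda_S,\lambda_Z\}\cup\mathcal{N}\cup\Sigma\cup\{\tau\}$. Constants: $X,Y,Z,I,S,C,C',D,G,G',G_u,G_v,G_v'$, $U_k,V_k$ ($k\in\mathcal{N}$), and $W(\omega,k),W(\omega,0)$ for $k\in\mathcal{N}$ and $\omega$ a (possibly empty) suffix of $u_k$ or of $v_k$; $\mathcal{W}$ is the set of these $W$-constants. Rules (with $k$ ranging over $\mathcal{N}$, $a$ over $\Sigma$, $W$ over $\mathcal{W}$): $X\stackrel{\lambda_U}{\longrightarrow}D\|G_v$, $X\stackrel{\tau}{\longrightarrow}D$, $Y\stackrel{\tau}{\longrightarrow}D$, $D\stackrel{\tau}{\longrightarrow}D\|G_u$, $D\stackrel{\lambda_D}{\longrightarrow}C$; $G_u\stackrel{\tau}{\longrightarrow}G_uU_k$, $G_u\stackrel{\lambda_U}{\longrightarrow}G_vU_k$, $G_u\stackrel{\tau}{\longrightarrow}G_v'$, $G_v'\stackrel{\tau}{\longrightarrow}G_v'V_k$,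 $G_v'\stackrel{\tau}{\longrightarrow}Z$; $G_v\stackrel{\tau}{\longrightarrow}G_vV_k$, $G_v\stackrel{\tau}{\longrightarrow}\epsilon$, $G_v\stackrel{\lambda_V}{\longrightarrow}Z$, $Z\stackrel{\tau}{\longrightarrow}\epsilon$, $Z\stackrel{\lambda_Z}{\longrightarrow}\epsilon$; $C\stackrel{\lambda_I}{\longrightarrow}I$, $C\stackrel{\lambda_S}{\longrightarrow}S$, $C\stackrel{\tau}{\longrightarrow}C\|G$, $C\stackrel{\tau}{\longrightarrow}C\|G_v$; $G\stackrel{\tau}{\longrightarrow}GU_k$, $G\stackrel{\tau}{\longrightarrow}GV_k$, $G\stackrel{\tau}{\longrightarrow}\epsilon$; $I\stackrel{\lambda_I}{\longrightarrow}C'$, $I\stackrel{k}{\longrightarrow}I$, $S\stackrel{\lambda_S}{\longrightarrow}C'$, $S\stackrel{a}{\longrightarrow}S$, $C'\stackrel{\tau}{\longrightarrow}C'\|G'$, $C'\stackrel{\tau}{\longrightarrow}\epsilon$; $G'\stackrel{\tau}{\longrightarrow}G'U_k$, $G'\stackrel{\tau}{\longrightarrow}G'V_k$, $G'\stackrel{\tau}{\longrightarrow}G'W$, $G'\stackrel{\tau}{\longrightarrow}G_v$, $G'\stackrel{\tau}{\longrightarrow}Z$; $U_k\stackrel{\tau}{\longrightarrow}W(u_k,k)$, $V_k\stackrel{\tau}{\longrightarrow}W(v_k,k)$; $W(a\omega,k)\stackrel{a}{\longrightarrow}W(\omega,k)$, $W(a\omega,0)\stackrel{a}{\longrightarrow}W(\omega,0)$,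 $W(\omega,k)\stackrel{k}{\longrightarrow}W(\omega,0)$, $W(a\omega,k)\stackrel{\tau}{\longrightarrow}W(\omega,k)$, $W(a\omega,0)\stackrel{\tau}{\longrightarrow}W(\omega,0)$, $W(\omega,k)\stackrel{\tau}{\longrightarrow}W(\omega,0)$, $W(\epsilon,0)\stackrel{\tau}{\longrightarrow}\epsilon$. Notation: $\mathbb{P}_u$ (resp. $\mathbb{P}_v$) denotes a sequential composition (possibly empty, i.e. $\epsilon$) of constants from $\{U_k:k\in\mathcal{N}\}$ (resp. $\{V_k:k\in\mathcal{N}\}$); $\mathbb{P}$ (resp. $\mathbb{Q}$) denotes a sequential composition (possibly empty) of constants from $\{U_k,V_k:k\in\mathcal{N}\}$ (resp. $\{U_k,V_k:k\in\mathcal{N}\}\cup\mathcal{W}$). *)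

From mathcomp Require Import all_boot.
Set Implicit Arguments.
Unset Strict Implicit.
Unset Printing Implicit Defensive.

(* The process algebra G, parameterised by an alphabet Sigma and a PCP
   instance given by n and the words u k, v k (k : 'I_n; the index set
   N = {1..n} of the paper is represented by 'I_n, and the special index 0
   of W(omega,0) by None : option 'I_n). *)
Section ProcessAlgebraG.
Variables (Sigma : finType) (n : nat) (u v : 'I_n -> seq Sigma).

Inductive act : Type :=
  | lamU | lamV | lamD | lamI | lamS | lamZ
  | actN of 'I_n
  | actA of Sigma
  | tau.

(* Constants.  cW w k stands for W(w,k) (k = Some k') or W(w,0) (k = None);
   only those satisfying [isW] below belong to the algebra. *)
Inductive const : Type :=
  | cX | cY | cZ | cI | cS | cC | cC' | cD | cG | cG' | cGu | cGv | cGv'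
  | cU of 'I_n
  | cV of 'I_n
  | cW of seq Sigma & option 'I_n.

Definition isW (c : const) : Prop :=
  match c with
  | cW w (Some k) => suffix w (u k) \/ suffix w (v k)
  | cW w None => exists k, suffix w (u k) \/ suffix w (v k)
  | _ => False
  end.

Inductive proc : Type :=
  | Eps
  | Con of const
  | Seq of proc & proc
  | Par of proc & proc.

(* Structural congruence: sequential composition associative, parallel
   composition associative and commutative, eps a unit for both.
   Processes are terms modulo this congruence. *)
Inductive sc : proc -> proc -> Prop :=
  | sc_refl P : sc P P
  | sc_sym P Q : sc P Q -> sc Q P
  | sc_trans P Q R : sc P Q -> sc Q R -> sc P R
  | sc_seq P P' Q Q' : sc P P' -> sc Q Q' -> sc (Seq P Q) (Seq P' Q')
  | sc_par P P' Q Q' : sc P P' -> sc Q Q' -> sc (Par P Q) (Par P' Q')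
  | sc_seqA P Q R : sc (Seq P (Seq Q R)) (Seq (Seq P Q) R)
  | sc_parA P Q R : sc (Par P (Par Q R)) (Par (Par P Q) R)
  | sc_parC P Q : sc (Par P Q) (Par Q P)
  | sc_seq1l P : sc (Seq Eps P) P
  | sc_seq1r P : sc (Seq P Eps) P
  | sc_par1l P : sc (Par Eps P) P.

Local Notation C c := (Con c).

Inductive rule : const -> act -> proc -> Prop :=
  | r_X1 : rule cX lamU (Par (C cD) (C cGv))
  | r_X2 : rule cX tau (C cD)
  | r_Y : rule cY tau (C cD)
  | r_D1 : rule cD tau (Par (C cD) (C cGu))
  | r_D2 : rule cD lamD (C cC)
  | r_Gu1 k : rule cGu tau (Seq (C cGu) (C (cU k)))
  | r_Gu2 k : rule cGu lamU (Seq (C cGv) (C (cU k)))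
  | r_Gu3 : rule cGu tau (C cGv')
  | r_Gv'1 k : rule cGv' tau (Seq (C cGv') (C (cV k)))
  | r_Gv'2 : rule cGv' tau (C cZ)
  | r_Gv1 k : rule cGv tau (Seq (C cGv) (C (cV k)))
  | r_Gv2 : rule cGv tau Eps
  | r_Gv3 : rule cGv lamV (C cZ)
  | r_Z1 : rule cZ tau Eps
  | r_Z2 : rule cZ lamZ Eps
  | r_C1 : rule cC lamI (C cI)
  | r_C2 : rule cC lamS (C cS)
  | r_C3 : rule cC tau (Par (C cC) (C cG))
  | r_C4 : rule cC tau (Par (C cC) (C cGv))
  | r_G1 k : rule cG tau (Seq (C cG) (C (cU k)))
  | r_G2 k : rule cG tau (Seq (C cG) (C (cV k)))
  | r_G3 : rule cG tau Eps
  | r_I1 : rule cI lamI (C cC')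
  | r_I2 k : rule cI (actN k) (C cI)
  | r_S1 : rule cS lamS (C cC')
  | r_S2 a : rule cS (actA a) (C cS)
  | r_C'1 : rule cC' tau (Par (C cC') (C cG'))
  | r_C'2 : rule cC' tau Eps
  | r_G'1 k : rule cG' tau (Seq (C cG') (C (cU k)))
  | r_G'2 k : rule cG' tau (Seq (C cG') (C (cV k)))
  | r_G'3 W : isW W -> rule cG' tau (Seq (C cG') (C W))
  | r_G'4 : rule cG' tau (C cGv)
  | r_G'5 : rule cG' tau (C cZ)
  | r_U k : rule (cU k) tau (C (cW (u k) (Some k)))
  | r_V k : rule (cV k) tau (C (cW (v k) (Some k)))
  | r_Wa a w k : isW (cW (a :: w) k) -> rule (cW (a :: w) k) (actA a) (C (cW w k))
  | r_Wk w k : isW (cW w (Some k)) -> rule (cW w (Some k)) (actN k) (C (cW w None))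
  | r_Wta a w k : isW (cW (a :: w) k) -> rule (cW (a :: w) k) tau (C (cW w k))
  | r_Wtk w k : isW (cW w (Some k)) -> rule (cW w (Some k)) tau (C (cW w None))
  | r_Weps : isW (cW [::] None) -> rule (cW [::] None) tau Eps.

Inductive step : proc -> act -> proc -> Prop :=
  | st_rule c l P : rule c l P -> step (C c) l P
  | st_seq P l P' Q : step P l P' -> step (Seq P Q) l (Seq P' Q)
  | st_parl P l P' Q : step P l P' -> step (Par P Q) l (Par P' Q)
  | st_parr P l P' Q : step P l P' -> step (Par Q P) l (Par Q P')
  | st_sc P P1 l P1' P' : sc P P1 -> step P1 l P1' -> sc P1' P' -> step P l P'.

Inductive taus : proc -> proc -> Prop :=
  | taus_refl P : taus P P
  | taus_step P P' P'' : step P tau P' -> taus P' P'' -> taus P P''.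

Definition bb_transfer (B : proc -> proc -> Prop) : Prop :=
  forall P Q, B P Q -> forall l P', step P l P' ->
    (exists Q'' Q', taus Q Q'' /\ step Q'' l Q' /\ B P Q'' /\ B P' Q')
    \/ (l = tau /\ B P' Q).

Definition branching_bisimulation (B : proc -> proc -> Prop) : Prop :=
  bb_transfer B /\ bb_transfer (fun P Q => B Q P).

Definition bbisim (P Q : proc) : Prop :=
  exists B, branching_bisimulation B /\ B P Q.

Definition seqs (ps : seq proc) : proc := foldr Seq Eps ps.

Definition Pu (ks : seq 'I_n) : proc := seqs [seq C (cU k) | k <- ks].
Definition Pv (ks : seq 'I_n) : proc := seqs [seq C (cV k) | k <- ks].
Definition Pc (cs : seq const) : proc := seqs [seq C c | c <- cs].

Definition isUV (c : const) : Prop :=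
  match c with cU _ | cV _ => True | _ => False end.


Definition allc (P : const -> Prop) (cs : seq const) : Prop :=
  foldr (fun c acc => P c /\ acc) True cs.

End ProcessAlgebraG.

Arguments cX {Sigma n}.
Arguments cY {Sigma n}.
Arguments cZ {Sigma n}.
Arguments cI {Sigma n}.
Arguments cS {Sigma n}.
Arguments cC {Sigma n}.
Arguments cC' {Sigma n}.
Arguments cD {Sigma n}.
Arguments cG {Sigma n}.
Arguments cG' {Sigma n}.
Arguments cGu {Sigma n}.
Arguments cGv {Sigma n}.
Arguments cGv' {Sigma n}.
Arguments lamU {Sigma n}.
Arguments lamV {Sigma n}.
Arguments lamD {Sigma n}.
Arguments lamI {Sigma n}.
Arguments lamS {Sigma n}.
Arguments lamZ {Sigma n}.
Arguments tau {Sigma n}.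
Arguments Eps {Sigma n}.

(* Most of the equivalences relate processes that are silently reachable
   from each other modulo structural congruence, and such processes are
   branching bisimilar: each can match every move of the other by first
   silently becoming it.  The hubs D, C and C' can silently spawn in parallel
   each generator and tail occurring in the statement, and all these tails
   can silently vanish.  The exception is D || Pv Pu versus D || W Pv Pu,
   since nothing can put W back in front of Pv Pu; there the bisimulation
   relates D || Y || W Pv Pu to the processes mutually reachable with D || Y,
   and a move of the extra W is answered by a copy of W that D spawns in
   parallel.  Moves of a process modulo structural congruence are analysed
   through its list of parallel components. *)

From mathcomp Require Import all_boot zify.
Set Implicit Arguments.
Unset Strict Implicit.
Unset Printing Implicit Defensive.

Section ProcessAlgebraG.
Variables (Sigma : finType) (n : nat) (u v : 'I_n -> seq Sigma).

Local Notation process := (proc Sigma n).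
Local Notation constant := (const Sigma n).

(** * Structural congruence *)

Lemma sc_par1r (P : process) : sc (Par P Eps) P.
Proof. exact: sc_trans (sc_parC _ _) (sc_par1l _). Qed.

Lemma sc_parCA (P Q R : process) : sc (Par P (Par Q R)) (Par Q (Par P R)).
Proof.
apply: sc_trans (sc_parA _ _ _) _.
apply: sc_trans (sc_par (sc_parC _ _) (sc_refl _)) _; exact: sc_sym (sc_parA _ _ _).
Qed.

Lemma sc_parAC (P Q R : process) : sc (Par (Par P Q) R) (Par (Par P R) Q).
Proof.
apply: sc_trans (sc_sym (sc_parA _ _ _)) _.
apply: sc_trans (sc_par (sc_refl _) (sc_parC _ _)) _; exact: sc_parA.
Qed.

Fixpoint csize (P : process) : nat :=
  match P with
  | Eps => 0
  | Con _ => 1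
  | Seq P Q | Par P Q => csize P + csize Q
  end.

Lemma csize_sc (P Q : process) : sc P Q -> csize P = csize Q.
Proof. by elim=> //= *; lia. Qed.

Lemma sc_eps (P : process) : csize P = 0 -> sc P Eps.
Proof.
elim: P => //= [|P IP Q IQ|P IP Q IQ] P0.
- exact: sc_refl.
- apply: sc_trans (sc_seq (IP _) (IQ _)) (sc_seq1l _); lia.
- apply: sc_trans (sc_par (IP _) (IQ _)) (sc_par1l _); lia.
Qed.

Fixpoint comps (P : process) : seq process :=
  match P with
  | Eps => [::]
  | Con c => [:: Con c]
  | Par P Q => comps P ++ comps Q
  | Seq P Q =>
      if csize P == 0 then comps Q else if csize Q == 0 then comps P
      else [:: Seq P Q]
  end.

Lemma comps_eps (P : process) : csize P = 0 -> comps P = [::].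
Proof.
elim: P => //= [P IP Q IQ|P IP Q IQ] P0.
- have -> : csize P == 0 by apply/eqP; lia.
  apply: IQ; lia.
- rewrite IP ?IQ //; lia.
Qed.

Fixpoint par_list (L : seq process) : process :=
  if L is P :: L' then Par P (par_list L') else Eps.

Lemma par_list_cat (L1 L2 : seq process) :
  sc (par_list (L1 ++ L2)) (Par (par_list L1) (par_list L2)).
Proof.
elim: L1 => /= [|P L1 IH]; first exact: sc_sym (sc_par1l _).
apply: sc_trans (sc_par (sc_refl P) IH) _; exact: sc_parA.
Qed.

Lemma sc_par_list_comps (P : process) : sc P (par_list (comps P)).
Proof.
elim: P => /= [|c|P IP Q IQ|P IP Q IQ].
- exact: sc_refl.
- exact: sc_sym (sc_par1r _).
- case: eqP => P0.
    apply: sc_trans IQ; exact: sc_trans (sc_seq (sc_eps P0) (sc_refl _)) (sc_seq1l _).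
  case: eqP => Q0; last exact: sc_sym (sc_par1r _).
  apply: sc_trans IP; exact: sc_trans (sc_seq (sc_refl _) (sc_eps Q0)) (sc_seq1r _).
- apply: sc_trans (sc_par IP IQ) _; exact: sc_sym (par_list_cat _ _).
Qed.

Inductive perm_sc : seq process -> seq process -> Prop :=
  | perm_sc_nil : perm_sc [::] [::]
  | perm_sc_cons P Q L1 L2 : sc P Q -> perm_sc L1 L2 -> perm_sc (P :: L1) (Q :: L2)
  | perm_sc_swap P Q L : perm_sc (P :: Q :: L) (Q :: P :: L)
  | perm_sc_trans L1 L2 L3 : perm_sc L1 L2 -> perm_sc L2 L3 -> perm_sc L1 L3.

Lemma perm_sc_refl (L : seq process) : perm_sc L L.
Proof. by elim: L => [|P L IH]; constructor => //; exact: sc_refl. Qed.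

Lemma perm_sc_sym (L1 L2 : seq process) : perm_sc L1 L2 -> perm_sc L2 L1.
Proof.
elim=> *; [constructor | apply: perm_sc_cons; [exact: sc_sym | done]
          | exact: perm_sc_swap | apply: perm_sc_trans; eassumption].
Qed.

Lemma perm_sc_catl (L L1 L2 : seq process) :
  perm_sc L1 L2 -> perm_sc (L ++ L1) (L ++ L2).
Proof. by elim: L => //= P L IH /IH; apply: perm_sc_cons (sc_refl _). Qed.

Lemma perm_sc_catr (L L1 L2 : seq process) :
  perm_sc L1 L2 -> perm_sc (L1 ++ L) (L2 ++ L).
Proof.
elim=> /= [|*|*|*]; [exact: perm_sc_refl | exact: perm_sc_cons
                    | exact: perm_sc_swap | apply: perm_sc_trans; eassumption].
Qed.

Lemma perm_sc_middle (P : process) (L1 L2 : seq process) :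
  perm_sc (P :: L1 ++ L2) (L1 ++ P :: L2).
Proof.
elim: L1 => /= [|Q L1 IH]; first exact: perm_sc_refl.
apply: perm_sc_trans (perm_sc_swap _ _ _) _; exact: perm_sc_cons (sc_refl _) IH.
Qed.

Lemma perm_sc_catC (L1 L2 : seq process) : perm_sc (L1 ++ L2) (L2 ++ L1).
Proof.
elim: L1 => /= [|P L1 IH]; first by rewrite cats0; exact: perm_sc_refl.
exact: perm_sc_trans (perm_sc_cons (sc_refl P) IH) (perm_sc_middle _ _ _).
Qed.

Lemma perm_sc_extract (L1 L2 : seq process) : perm_sc L1 L2 ->
  forall La P Lb, L1 = La ++ P :: Lb ->
  exists Ma Q Mb, [/\ L2 = Ma ++ Q :: Mb, sc P Q & perm_sc (La ++ Lb) (Ma ++ Mb)].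
Proof.
elim=> {L1 L2}.
- by case.
- move=> P0 Q0 L1 L2 P0Q0 L12 IH [|R La] P Lb /= [E1 E2].
    by subst P0 L1; exists [::], Q0, L2.
  subst P0; have [Ma [Q [Mb [-> PQ LM]]]] := IH _ _ _ E2.
  by exists (Q0 :: Ma), Q, Mb; split=> //; apply: perm_sc_cons.
- move=> P0 Q0 L [|R1 [|R2 La]] P Lb /=.
  + case=> -> <-; exists [:: Q0], P, L.
    split=> //; [exact: sc_refl | exact: perm_sc_refl].
  + case=> -> -> ->; exists [::], P, (R1 :: Lb).
    split=> //; [exact: sc_refl | exact: perm_sc_refl].
  + case=> -> -> ->; exists [:: R2, R1 & La], P, Lb.
    split=> //; [exact: sc_refl | exact: perm_sc_swap].
- move=> L1 L2 L3 _ IH1 _ IH2 La P Lb E.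
  have [Ma [Q [Mb [E' PQ LM]]]] := IH1 _ _ _ E.
  have [Na [R [Nb [E'' QR MN]]]] := IH2 _ _ _ E'.
  exists Na, R, Nb; split=> //; [exact: sc_trans QR | exact: perm_sc_trans MN].
Qed.

Lemma sc_par_list (L1 L2 : seq process) : perm_sc L1 L2 -> sc (par_list L1) (par_list L2).
Proof.
elim=> /= [|*|P Q L|*].
- exact: sc_refl.
- exact: sc_par.
- apply: sc_trans (sc_parA _ _ _) _.
  apply: sc_trans (sc_par (sc_parC _ _) (sc_refl _)) _; exact: sc_sym (sc_parA _ _ _).
- apply: sc_trans; eassumption.
Qed.

Lemma sc_par_list_perm (P : process) (L : seq process) :
  perm_sc (comps P) L -> sc P (par_list L).
Proof. by move/sc_par_list; apply: sc_trans (sc_par_list_comps P). Qed.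

Lemma comps_sc (P Q : process) : sc P Q -> perm_sc (comps P) (comps Q).
Proof.
elim=> {P Q}.
- move=> P; exact: perm_sc_refl.
- move=> *; exact: perm_sc_sym.
- move=> *; apply: perm_sc_trans; eassumption.
- move=> P P' Q Q' PP' HP QQ' HQ /=; rewrite (csize_sc PP') (csize_sc QQ').
  case: (csize P' == 0) => //; case: (csize Q' == 0) => //.
  exact: perm_sc_cons (sc_seq PP' QQ') (perm_sc_nil).
- move=> P P' Q Q' _ HP _ HQ.
  exact: perm_sc_trans (perm_sc_catr _ HP) (perm_sc_catl _ HQ).
- move=> P Q R /=; rewrite !addn_eq0.
  case P0: (csize P == 0); case Q0: (csize Q == 0); case R0: (csize R == 0) => /=;
    rewrite ?P0 ?Q0 ?R0 /=; try exact: perm_sc_refl.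
  1-4: apply: perm_sc_cons; last exact: perm_sc_nil.
  + apply: sc_seq (sc_refl _); apply: sc_sym.
    exact: sc_trans (sc_seq (sc_eps (eqP P0)) (sc_refl _)) (sc_seq1l _).
  + exact: sc_seqA.
  + apply: sc_seq (sc_refl _) _.
    exact: sc_trans (sc_seq (sc_refl _) (sc_eps (eqP R0))) (sc_seq1r _).
  + exact: sc_seqA.
- move=> P Q R /=; rewrite catA; exact: perm_sc_refl.
- move=> P Q /=; exact: perm_sc_catC.
- move=> P /=; exact: perm_sc_refl.
- move=> P /=; case: eqP => P0; last exact: perm_sc_refl.
  rewrite comps_eps //; exact: perm_sc_nil.
- move=> P /=; exact: perm_sc_refl.
Qed.


Local Notation step := (step u v).
Local Notation rule := (rule u v).

Lemma csize_step (P : process) l P' : step P l P' -> 0 < csize P.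
Proof. by elim=> //= [*|*|*|P1 P2 l1 P2' P1' /csize_sc -> _ IH _]; lia. Qed.

Lemma step_comp (P : process) l P' : step P l P' ->
  exists x x' R, [/\ comps x = [:: x], step x l x', sc P (Par x R) & sc P' (Par x' R)].
Proof.
elim=> {P l P'}.
- move=> c l P cP; exists (Con c), P, Eps.
  split=> //; [exact: st_rule | exact: sc_sym (sc_par1r _) | exact: sc_sym (sc_par1r _)].
- move=> P l P' Q PP' [x [x' [R [cx xx' HP HP']]]].
  case: (csize Q =P 0) => Q0.
    exists x, x', R; split=> //.
      by apply: sc_trans HP; exact: sc_trans (sc_seq (sc_refl _) (sc_eps Q0)) (sc_seq1r _).
    by apply: sc_trans HP'; exact: sc_trans (sc_seq (sc_refl _) (sc_eps Q0)) (sc_seq1r _).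
  exists (Seq P Q), (Seq P' Q), Eps; split.
  + by rewrite /= (negbTE (lt0n_neq0 (csize_step PP'))); move/eqP/negbTE: Q0 => ->.
  + exact: st_seq.
  + exact: sc_sym (sc_par1r _).
  + exact: sc_sym (sc_par1r _).
- move=> P l P' Q _ [x [x' [R [cx xx' HP HP']]]].
  exists x, x', (Par R Q); split=> //.
    by apply: sc_trans (sc_par HP (sc_refl _)) _; exact: sc_sym (sc_parA _ _ _).
  by apply: sc_trans (sc_par HP' (sc_refl _)) _; exact: sc_sym (sc_parA _ _ _).
- move=> P l P' Q _ [x [x' [R [cx xx' HP HP']]]].
  exists x, x', (Par Q R); split=> //.
    by apply: sc_trans (sc_par (sc_refl _) HP) _; exact: sc_parCA.
  by apply: sc_trans (sc_par (sc_refl _) HP') _; exact: sc_parCA.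
- move=> P P1 l P1' P' PP1 _ [x [x' [R [cx xx' HP HP']]]] P1'P'.
  exists x, x', R; split=> //; [exact: sc_trans HP | exact: sc_trans (sc_sym P1'P') HP'].
Qed.

Lemma cat_cons_split (T : Type) (La Lb Ma Mb : seq T) x :
  Ma ++ x :: Mb = La ++ Lb ->
  (exists2 M, La = Ma ++ x :: M & Mb = M ++ Lb) \/
  (exists2 M, Lb = M ++ x :: Mb & Ma = La ++ M).
Proof.
elim: La Ma => [|y La IH] [|z Ma] /=.
- by move=> <-; right; exists [::].
- by move=> <-; right; exists (z :: Ma).
- by case=> <- ->; left; exists La.
- case=> -> /IH [[M -> ->]|[M -> ->]]; [by left; exists M | by right; exists M].
Qed.

Lemma step_par_inv (P Q : process) l R' : step (Par P Q) l R' ->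
  (exists2 P', step P l P' & sc R' (Par P' Q)) \/
  (exists2 Q', step Q l Q' & sc R' (Par P Q')).
Proof.
move=> /step_comp [x [x' [R [cx xx' HPQ HR']]]].
have : perm_sc (x :: comps R) (comps P ++ comps Q).
  by apply: perm_sc_sym; have := comps_sc HPQ; rewrite /= cx.
move=> /perm_sc_extract /(_ [::] x (comps R) erefl) [Ma [y [Mb [E xy HR]]]].
have HR'' : sc R' (Par x' (par_list (Ma ++ Mb))).
  exact: sc_trans HR' (sc_par (sc_refl _) (sc_par_list_perm HR)).
case: (cat_cons_split (esym E)) => [[M EP EMb]|[M EQ EMa]].
- left; exists (Par x' (par_list (Ma ++ M))).
    apply: st_sc (st_parl _ xx') (sc_refl _).
    apply: sc_trans (sc_par_list_perm (L := y :: Ma ++ M) _) (sc_par (sc_sym xy) (sc_refl _)).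
    by rewrite EP; exact: perm_sc_sym (perm_sc_middle _ _ _).
  apply: sc_trans HR'' _; rewrite EMb catA.
  apply: sc_trans (sc_par (sc_refl _) (par_list_cat _ _)) _.
  apply: sc_trans (sc_parA _ _ _) (sc_par (sc_refl _) (sc_sym (sc_par_list_comps _))).
- right; exists (Par x' (par_list (M ++ Mb))).
    apply: st_sc (st_parl _ xx') (sc_refl _).
    apply: sc_trans (sc_par_list_perm (L := y :: M ++ Mb) _) (sc_par (sc_sym xy) (sc_refl _)).
    by rewrite EQ; exact: perm_sc_sym (perm_sc_middle _ _ _).
  apply: sc_trans HR'' _; rewrite EMa -catA.
  apply: sc_trans (sc_par (sc_refl _) (par_list_cat _ _)) _.
  apply: sc_trans (sc_parCA _ _ _) (sc_par (sc_sym (sc_par_list_comps _)) (sc_refl _)).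
Qed.

Fixpoint seq_consts (P : process) : option (seq constant) :=
  match P with
  | Eps => Some [::]
  | Con c => Some [:: c]
  | Seq P Q =>
      if (seq_consts P, seq_consts Q) is (Some a, Some b) then Some (a ++ b) else None
  | Par P Q =>
      if csize P == 0 then seq_consts Q else if csize Q == 0 then seq_consts P else None
  end.

Lemma seq_consts_eps (P : process) : csize P = 0 -> seq_consts P = Some [::].
Proof.
elim: P => //= [P IP Q IQ|P IP Q IQ] P0.
- rewrite IP ?IQ //; lia.
- have -> : csize P == 0 by apply/eqP; lia.
  apply: IQ; lia.
Qed.

Lemma seq_consts_sc (P Q : process) : sc P Q -> seq_consts P = seq_consts Q.
Proof.
elim=> {P Q} //=.
- by move=> P Q R _ -> _ ->.
- by move=> P P' Q Q' _ -> _ ->.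
- by move=> P P' Q Q' HP -> HQ ->; rewrite (csize_sc HP) (csize_sc HQ).
- move=> P Q R.
  by case: (seq_consts P) => // a; case: (seq_consts Q) => // b; case: (seq_consts R) => // c;
    rewrite catA.
- move=> P Q R; rewrite !addn_eq0.
  by case: (csize P == 0); case: (csize Q == 0); case: (csize R == 0).
- move=> P Q; case P0: (csize P == 0); case Q0: (csize Q == 0) => //.
  by rewrite !seq_consts_eps //; apply/eqP.
- by move=> P; case: (seq_consts P).
- by move=> P; case: (seq_consts P) => // a; rewrite cats0.
Qed.

Lemma size_seq_consts (P : process) cs : seq_consts P = Some cs -> size cs = csize P.
Proof.
elim: P cs => /= [|c|P IP Q IQ|P IP Q IQ] cs.
- by case=> <-.
- by case=> <-.
- case EP: (seq_consts P) => [a|] //; case EQ: (seq_consts Q) => [b|] // [<-].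
  by rewrite size_cat (IP _ EP) (IQ _ EQ).
- case: eqP => P0; first by move=> /IQ ->; lia.
  by case: eqP => Q0 // /IP ->; lia.
Qed.

Lemma seq_consts_Pc (cs : seq constant) : seq_consts (Pc cs) = Some cs.
Proof. by elim: cs => //= c cs; rewrite /Pc /= => ->. Qed.

Lemma Pc_cat (cs1 cs2 : seq constant) : sc (Pc (cs1 ++ cs2)) (Seq (Pc cs1) (Pc cs2)).
Proof.
elim: cs1 => /= [|c cs1 IH]; first exact: sc_sym (sc_seq1l _).
apply: sc_trans (sc_seq (sc_refl _) IH) _; exact: sc_seqA.
Qed.

Lemma sc_Pc_seq_consts (P : process) cs : seq_consts P = Some cs -> sc P (Pc cs).
Proof.
elim: P cs => /= [|c|P IP Q IQ|P IP Q IQ] cs.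
- by case=> <-; exact: sc_refl.
- by case=> <-; exact: sc_sym (sc_seq1r _).
- case EP: (seq_consts P) => [a|] //; case EQ: (seq_consts Q) => [b|] // [<-].
  apply: sc_trans (sc_seq (IP _ EP) (IQ _ EQ)) _; exact: sc_sym (Pc_cat _ _).
- case: eqP => P0.
    move=> /IQ; apply: sc_trans.
    exact: sc_trans (sc_par (sc_eps P0) (sc_refl _)) (sc_par1l _).
  case: eqP => Q0 // /IP; apply: sc_trans.
  exact: sc_trans (sc_par (sc_refl _) (sc_eps Q0)) (sc_par1r _).
Qed.

Lemma step_seq_consts_inv (P : process) l P' : step P l P' ->
  forall c cs, seq_consts P = Some (c :: cs) ->
  exists2 R, rule c l R & sc P' (Seq R (Pc cs)).
Proof.
elim=> {P l P'}.
- move=> c0 l P cP c cs [<- <-].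
  by exists P => //; exact: sc_sym (sc_seq1r _).
- move=> P l P' Q PP' IH c cs /=.
  case EP: (seq_consts P) => [[|c' a]|] //; case EQ: (seq_consts Q) => [b|] //.
    by have := size_seq_consts EP; have := csize_step PP'; move=> ? /= ?; lia.
  case=> <- <-; have [R cR HP'] := IH _ _ EP; exists R => //.
  apply: sc_trans (sc_seq HP' (sc_Pc_seq_consts EQ)) _.
  apply: sc_trans (sc_sym (sc_seqA _ _ _)) (sc_seq (sc_refl _) (sc_sym (Pc_cat _ _))).
- move=> P l P' Q PP' IH c cs /=.
  have := csize_step PP'; case: eqP => [-> //|_ _].
  case: eqP => // Q0 /IH [R cR HP']; exists R => //.
  exact: sc_trans (sc_par HP' (sc_eps Q0)) (sc_par1r _).
- move=> P l P' Q PP' IH c cs /=.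
  case: eqP => [Q0 /IH [R cR HP']|_].
    by exists R => //; exact: sc_trans (sc_par (sc_eps Q0) HP') (sc_par1l _).
  by have := csize_step PP'; case: eqP => [->|].
- move=> P P1 l P1' P' PP1 _ IH P1'P' c cs E.
  rewrite (seq_consts_sc PP1) in E; have [R cR HP'] := IH _ _ E.
  by exists R => //; exact: sc_trans (sc_sym P1'P') HP'.
Qed.

Lemma step_con_inv (c : constant) l P' :
  step (Con c) l P' -> exists2 R, rule c l R & sc P' R.
Proof.
move=> /step_seq_consts_inv /(_ c [::] erefl) [R cR HP'].
by exists R => //; exact: sc_trans HP' (sc_seq1r _).
Qed.

Lemma step_seq_con_inv (c : constant) cs l P' :
  step (Seq (Con c) (Pc cs)) l P' -> exists2 R, rule c l R & sc P' (Seq R (Pc cs)).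
Proof. by move=> /step_seq_consts_inv; apply; rewrite /= seq_consts_Pc. Qed.


Local Notation taus := (taus u v).

(** * Silent reachability modulo structural congruence *)

Definition reach (P Q : process) : Prop := exists2 Q', taus P Q' & sc Q' Q.

Lemma reach_sc (P Q : process) : sc P Q -> reach P Q.
Proof. by exists P => //; exact: taus_refl. Qed.

Lemma reach_refl (P : process) : reach P P.
Proof. exact: reach_sc (sc_refl _). Qed.

Lemma reach_tau (P P' Q : process) : step P tau P' -> reach P' Q -> reach P Q.
Proof. by move=> PP' [Q' P'Q' Q'Q]; exists Q' => //; exact: taus_step PP' P'Q'. Qed.

Lemma reach_rule c (P : process) : rule c tau P -> reach (Con c) P.
Proof. by move/st_rule/reach_tau; apply; exact: reach_refl. Qed.

Lemma taus_trans (P Q R : process) : taus P Q -> taus Q R -> taus P R.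
Proof. by elim=> // P1 P2 P3 P12 _ IH /IH; exact: taus_step. Qed.

Lemma taus_scl (P P0 Q : process) : taus P0 Q -> sc P P0 -> exists2 Q', taus P Q' & sc Q' Q.
Proof.
case=> [|R R' R'' RR' R'R''] PP0; first by exists P; first exact: taus_refl.
by exists R''; [exact: taus_step (st_sc PP0 RR' (sc_refl _)) R'R'' | exact: sc_refl].
Qed.

Lemma reach_trans (P Q R : process) : reach P Q -> reach Q R -> reach P R.
Proof.
move=> [Q' PQ' Q'Q] [R' QR' R'R]; have [R'' Q'R'' R''R'] := taus_scl QR' Q'Q.
by exists R''; [exact: taus_trans PQ' Q'R'' | exact: sc_trans R''R' R'R].
Qed.

Lemma reach_scl (P P0 Q : process) : sc P P0 -> reach P0 Q -> reach P Q.
Proof. by move/reach_sc; exact: reach_trans. Qed.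

Lemma reach_scr (P Q Q0 : process) : reach P Q0 -> sc Q0 Q -> reach P Q.
Proof. by move=> PQ0 /reach_sc; exact: reach_trans. Qed.

Lemma reach_context (f : process -> process) :
  (forall P P', step P tau P' -> step (f P) tau (f P')) ->
  (forall P P', sc P P' -> sc (f P) (f P')) ->
  forall P Q, reach P Q -> reach (f P) (f Q).
Proof.
move=> f_step f_sc P Q [Q' PQ' /f_sc Q'Q]; exists (f Q') => //.
by elim: PQ' {Q'Q} => [R|R R' R'' /f_step RR' _ IH]; [exact: taus_refl | exact: taus_step RR' IH].
Qed.

Lemma reach_parl (X P Q : process) : reach P Q -> reach (Par P X) (Par Q X).
Proof.
apply: (reach_context (f := fun P => Par P X)) => *; [exact: st_parl | exact: sc_par (sc_refl _)].
Qed.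

Lemma reach_parr (X P Q : process) : reach P Q -> reach (Par X P) (Par X Q).
Proof.
apply: (reach_context (f := fun P => Par X P)) => *; [exact: st_parr | exact: sc_par (sc_refl _) _].
Qed.

Lemma reach_seq (X P Q : process) : reach P Q -> reach (Seq P X) (Seq Q X).
Proof.
apply: (reach_context (f := fun P => Seq P X)) => *; [exact: st_seq | exact: sc_seq (sc_refl _)].
Qed.

Lemma reach_seq_eps (P Q : process) : reach P Eps -> reach Q Eps -> reach (Seq P Q) Eps.
Proof. by move=> /(reach_seq Q) PQ Q0; exact: reach_trans PQ (reach_scl (sc_seq1l _) Q0). Qed.

Lemma reach_par_eps (X S : process) : reach S Eps -> reach (Par X S) X.
Proof. by move/(reach_parr X)/reach_scr; apply; exact: sc_par1r. Qed.

Lemma reach_hub_trans (H S T : process) :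
  reach H (Par H S) -> reach S T -> reach H (Par H T).
Proof. by move=> HS /(reach_parr H); exact: reach_trans. Qed.

Lemma reach_hub_par (H X S : process) :
  reach H (Par H S) -> reach (Par H X) (Par (Par H X) S).
Proof. by move/(reach_parl X)/reach_scr; apply; exact: sc_parAC. Qed.

(** * Mutual reachability and branching bisimilarity *)

Definition mutual_reach (P Q : process) : Prop := reach P Q /\ reach Q P.

Lemma mutual_reach_sym (P Q : process) : mutual_reach P Q -> mutual_reach Q P.
Proof. by case. Qed.

Lemma mutual_reach_trans (P Q R : process) :
  mutual_reach P Q -> mutual_reach Q R -> mutual_reach P R.
Proof. by move=> [PQ QP] [QR RQ]; split; apply: reach_trans; eassumption. Qed.

Lemma mutual_reach_sc (P Q : process) : sc P Q -> mutual_reach P Q.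
Proof. by move=> PQ; split; apply: reach_sc => //; exact: sc_sym. Qed.

Lemma mutual_reach_hub (H S : process) :
  reach H (Par H S) -> reach S Eps -> mutual_reach H (Par H S).
Proof. by move=> HS /(reach_par_eps H). Qed.

Lemma reach_transfer (P Q : process) l P' : reach Q P -> step P l P' ->
  exists Q'' Q', taus Q Q'' /\ step Q'' l Q' /\ mutual_reach P Q'' /\ mutual_reach P' Q'.
Proof.
move=> [Q'' QQ'' Q''P] PP'; exists Q'', P'; split=> //; split.
  exact: st_sc Q''P PP' (sc_refl _).
by split; apply: mutual_reach_sc; [exact: sc_sym Q''P | exact: sc_refl].
Qed.

Lemma branching_bisimulation_sym (B : process -> process -> Prop) :
  (forall P Q, B P Q -> B Q P) -> bb_transfer u v B -> branching_bisimulation u v B.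
Proof.
move=> Bsym BT; split=> // P Q /Bsym BQP l P' PP'.
have [[Q'' [Q' [QQ'' [Q''Q' [/Bsym BPQ'' /Bsym BP'Q']]]]]|[-> /Bsym BP'Q]] :=
  BT _ _ BQP _ _ PP'.
  by left; exists Q'', Q'.
by right; split.
Qed.

Lemma bbisim_mutual_reach (P Q : process) : mutual_reach P Q -> bbisim u v P Q.
Proof.
move=> PQ; exists mutual_reach; split=> //.
apply: branching_bisimulation_sym => [? ? /mutual_reach_sym //|P1 Q1 [_ Q1P1] l P1' P1P1'].
by left; apply: reach_transfer Q1P1 P1P1'.
Qed.

Lemma bbisim_hub (H S T : process) :
  reach H (Par H S) -> reach S Eps -> reach H (Par H T) -> reach T Eps ->
  bbisim u v (Par H S) (Par H T).
Proof.
move=> HS S0 HT T0; apply: bbisim_mutual_reach.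
exact: mutual_reach_trans (mutual_reach_sym (mutual_reach_hub HS S0)) (mutual_reach_hub HT T0).
Qed.


Local Notation isW := (isW u v).
Local Notation D := (Con (@cD Sigma n)).
Local Notation C := (Con (@cC Sigma n)).

(** * Silent moves of the algebra G *)

Lemma isW_suffix (s t : seq Sigma) k : isW (cW s k) -> suffix t s -> isW (cW t k).
Proof.
case: k => [k|] /= => [[] ts|[k []] ts] st;
  by [left; exact: suffix_trans st ts | right; exact: suffix_trans st ts
     | exists k; left; exact: suffix_trans st ts | exists k; right; exact: suffix_trans st ts].
Qed.

Lemma reach_W_suffix (s t : seq Sigma) k :
  isW (cW s k) -> suffix t s -> reach (Con (cW s k)) (Con (cW t k)).
Proof.
move=> sW /suffixP [p E]; subst s; elim: p sW => [|a p IH] pW /=; first exact: reach_refl.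
apply: reach_tau (st_rule (r_Wta pW)) (IH _).
by apply: isW_suffix pW _; exact: suffix_cons.
Qed.

Lemma W_vanishes (W : constant) : isW W -> reach (Con W) Eps.
Proof.
case: W => // s k sW; apply: reach_trans (reach_W_suffix sW (suffix0s s)) _.
have eW := isW_suffix sW (suffix0s s).
case: k {sW} eW => [k|] eW; last exact: reach_rule (r_Weps eW).
apply: reach_tau (st_rule (r_Wtk eW)) (reach_rule (r_Weps _)).
by exists k; left; exact: suffix0s.
Qed.

Lemma rule_W (W : constant) l R :
  rule W l R -> isW W -> R = Eps \/ exists2 W', R = Con W' & isW W'.
Proof.
case=> //= [a s k|s k|a s k|s k|_ _]; try by left.
all: move=> sW _; right; eexists; first reflexivity.
all: by [apply: isW_suffix sW _; exact: suffix_cons | exists k].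
Qed.

Lemma reach_UV_W (W : constant) : isW W -> exists2 c, isUV c & reach (Con c) (Con W).
Proof.
have from_U k s j : suffix s (u k) -> isW (cW s j) ->
    (j = Some k \/ j = None) -> reach (Con (cU Sigma k)) (Con (cW s j)).
  move=> sk sW [->|->]; apply: reach_tau (st_rule (r_U _ _ k)) _.
    by apply: reach_W_suffix sk; left; exact: suffix_refl.
  apply: reach_trans (reach_W_suffix (k := Some k) _ sk) (reach_rule (r_Wtk _)) => /=;
    by [left; exact: suffix_refl | left].
have from_V k s j : suffix s (v k) -> isW (cW s j) ->
    (j = Some k \/ j = None) -> reach (Con (cV Sigma k)) (Con (cW s j)).
  move=> sk sW [->|->]; apply: reach_tau (st_rule (r_V _ _ k)) _.
    by apply: reach_W_suffix sk; right; exact: suffix_refl.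
  apply: reach_trans (reach_W_suffix (k := Some k) _ sk) (reach_rule (r_Wtk _)) => /=;
    by [right; exact: suffix_refl | right].
case: W => // s [k|] sW; [case: (sW) => sk | case: (sW) => k [] sk].
- by exists (cU Sigma k) => //; apply: from_U; auto.
- by exists (cV Sigma k) => //; apply: from_V; auto.
- by exists (cU Sigma k) => //; apply: from_U; auto.
- by exists (cV Sigma k) => //; apply: from_V; auto.
Qed.

Definition tau_vanishing (c : constant) : Prop :=
  match c with
  | cZ | cGu | cGv | cGv' | cG | cG' | cC' | cU _ | cV _ => True
  | cW _ _ => isW c
  | _ => False
  end.

Lemma const_vanishes (c : constant) : tau_vanishing c -> reach (Con c) Eps.
Proof.
have Z0 : reach (Con cZ) Eps := reach_rule (r_Z1 _ _).
have Gv'0 : reach (Con cGv') Eps := reach_tau (st_rule (r_Gv'2 _ _)) Z0.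
case: c => //= [_|_|_|_|_|k _|k _|s k sW].
- exact: reach_rule (r_C'2 _ _).
- exact: reach_rule (r_G3 _ _).
- exact: reach_tau (st_rule (r_G'5 _ _)) Z0.
- exact: reach_tau (st_rule (r_Gu3 _ _)) Gv'0.
- exact: reach_rule (r_Gv2 _ _).
- apply: reach_tau (st_rule (r_U _ _ k)) _; apply: W_vanishes.
  by left; exact: suffix_refl.
- apply: reach_tau (st_rule (r_V _ _ k)) _; apply: W_vanishes.
  by right; exact: suffix_refl.
- exact: W_vanishes (cW s k) sW.
Qed.

Lemma seq_vanishes (c : constant) (X : process) :
  tau_vanishing c -> reach X Eps -> reach (Seq (Con c) X) Eps.
Proof. by move/const_vanishes; exact: reach_seq_eps. Qed.

Lemma Pc_vanishes (cs : seq constant) : allc tau_vanishing cs -> reach (Pc cs) Eps.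
Proof.
elim: cs => [_|c cs IH [c0 /IH cs0]]; first exact: reach_refl.
exact: seq_vanishes c0 cs0.
Qed.

Lemma allc_sub (P Q : constant -> Prop) cs :
  (forall c, P c -> Q c) -> allc P cs -> allc Q cs.
Proof. by move=> PQ; elim: cs => //= c cs IH [/PQ Qc /IH]; split. Qed.

Lemma allc_cat (P : constant -> Prop) cs1 cs2 :
  allc P cs1 -> allc P cs2 -> allc P (cs1 ++ cs2).
Proof. by elim: cs1 => //= c cs1 IH [Pc Pcs1] Pcs2; split=> //; exact: IH. Qed.

Lemma allc_map (T : Type) (P : constant -> Prop) (f : T -> constant) (s : seq T) :
  (forall x, P (f x)) -> allc P (map f s).
Proof. by move=> Pf; elim: s. Qed.

Lemma UV_vanishing (c : constant) : isUV c -> tau_vanishing c.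
Proof. by case: c. Qed.

Lemma W_vanishing (c : constant) : isW c -> tau_vanishing c.
Proof. by case: c. Qed.

Lemma rule_G_UV (c : constant) : isUV c -> rule cG tau (Seq (Con cG) (Con c)).
Proof. by case: c => // k _; constructor. Qed.

Lemma rule_G'_UVW (c : constant) : isUV c \/ isW c -> rule cG' tau (Seq (Con cG') (Con c)).
Proof. by case=> [|/r_G'3 //]; case: c => // k _; constructor. Qed.

Lemma reach_generate (g : constant) cs :
  allc (fun c => rule g tau (Seq (Con g) (Con c))) cs ->
  reach (Con g) (Seq (Con g) (Pc cs)).
Proof.
elim: cs => [_|c cs IH [gc /IH gcs]] /=; first exact: reach_sc (sc_sym (sc_seq1r _)).
apply: reach_trans gcs (reach_scr (reach_seq _ (reach_rule gc)) (sc_sym (sc_seqA _ _ _))).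
Qed.


Lemma reach_D_UV (c : constant) : isUV c -> reach D (Par D (Con c)).
Proof.
move=> cUV; apply: reach_hub_trans (reach_rule (r_D1 _ _)) _.
have Z0 : reach (Seq (Con cZ) (Con c)) (Con c).
  exact: reach_scr (reach_seq _ (reach_rule (r_Z1 _ _))) (sc_seq1l _).
case: c cUV Z0 => // k _ Z0.
- apply: reach_tau (st_rule (r_Gu1 _ _ k)) _.
  apply: reach_tau (st_seq _ (st_rule (r_Gu3 _ _))) _.
  exact: reach_tau (st_seq _ (st_rule (r_Gv'2 _ _))) Z0.
- apply: reach_tau (st_rule (r_Gu3 _ _)) _.
  apply: reach_tau (st_rule (r_Gv'1 _ _ k)) _.
  exact: reach_tau (st_seq _ (st_rule (r_Gv'2 _ _))) Z0.
Qed.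

Lemma reach_D_W (W : constant) : isW W -> reach D (Par D (Con W)).
Proof.
by move=> /reach_UV_W [c /reach_D_UV Dc cW]; apply: reach_hub_trans Dc cW.
Qed.

Lemma reach_C_W (W : constant) cs :
  isW W -> allc (@isUV Sigma n) cs -> reach C (Par C (Seq (Con W) (Pc cs))).
Proof.
move=> /reach_UV_W [c cUV cW] csUV.
apply: reach_hub_trans (reach_rule (r_C3 _ _)) _.
apply: reach_trans (reach_generate (cs := c :: cs) _) _.
  by split; [exact: rule_G_UV | exact: allc_sub rule_G_UV csUV].
apply: reach_tau (st_seq _ (st_rule (r_G3 _ _))) (reach_scl (sc_seq1l _) _).
exact: reach_seq.
Qed.

(* Unlike the other pairs, [D || Pv Pu] cannot silently rebuild the prefix W
   in front of [Pv Pu]; the extra thread is matched by letting D spawn a copy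
   of W in parallel instead. *)
Section ExtraThread.

Variable L : seq constant.
Hypothesis L_UV : allc (@isUV Sigma n) L.
Hypothesis D_L : reach D (Par D (Pc L)).

Let L_vanishes : reach (Pc L) Eps.
Proof. exact: Pc_vanishes (allc_sub UV_vanishing L_UV). Qed.

Definition extra_thread (P Q : process) : Prop :=
  exists Y W, [/\ isW W, sc P (Par (Par D Y) (Seq (Con W) (Pc L))) & mutual_reach Q (Par D Y)].

Definition extra_thread_rel (P Q : process) : Prop :=
  mutual_reach P Q \/ extra_thread P Q \/ extra_thread Q P.

Lemma extra_thread_reach (P Q : process) : extra_thread P Q -> reach P Q.
Proof.
move=> [Y [W [W_W HP [_ DYQ]]]]; apply: reach_scl HP (reach_trans (reach_par_eps _ _) DYQ).
exact: reach_seq_eps (W_vanishes W_W) L_vanishes.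
Qed.

Lemma extra_thread_after_D (Y P' R : process) l W :
  rule cD l R -> isW W -> sc P' (Par (Par R Y) (Seq (Con W) (Pc L))) ->
  extra_thread_rel P' (Par R Y).
Proof.
move=> DR W_W HP'; inversion DR; subst.
- right; left; exists (Par (Con cGu) Y), W; split=> //.
    exact: sc_trans HP' (sc_par (sc_sym (sc_parA _ _ _)) (sc_refl _)).
  exact: mutual_reach_sc (sc_sym (sc_parA _ _ _)).
- left; split.
    apply: reach_scl HP' (reach_par_eps _ _).
    exact: reach_seq_eps (W_vanishes W_W) L_vanishes.
  exact: reach_scr (reach_hub_par _ (reach_C_W W_W L_UV)) (sc_sym HP').
Qed.

Lemma extra_thread_after_W (Y P' R : process) l W :
  rule W l R -> isW W -> sc P' (Par (Par D Y) (Seq R (Pc L))) ->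
  extra_thread_rel P' (Par (Par D Y) R).
Proof.
move=> WR W_W; case: (rule_W WR W_W) => [->|[W' -> W'_W]] HP'.
- left; apply: mutual_reach_trans (mutual_reach_sc _) _.
    exact: sc_trans HP' (sc_par (sc_refl _) (sc_seq1l _)).
  apply: mutual_reach_trans _ (mutual_reach_sc (sc_sym (sc_par1r _))).
  exact: mutual_reach_sym (mutual_reach_hub (reach_hub_par _ D_L) L_vanishes).
- right; left; exists Y, W'; split=> //.
  apply: mutual_reach_sym (mutual_reach_hub (reach_hub_par _ (reach_D_W W'_W)) _).
  exact: W_vanishes W'_W.
Qed.

Lemma extra_thread_transfer (P Q : process) l P' : extra_thread P Q -> step P l P' ->
  exists Q'' Q', taus Q Q'' /\ step Q'' l Q' /\
                 extra_thread_rel P Q'' /\ extra_thread_rel P' Q'.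
Proof.
move=> [Y [W [W_W HP HQ]]] PP'.
move: (st_sc (sc_sym HP) PP' (sc_refl _)) => /step_par_inv {PP'}.
have [Q0 QQ0 Q0DY] := proj1 HQ.
have PQ0 : extra_thread_rel P Q0.
  by right; left; exists Y, W; split=> //; exact: mutual_reach_sc Q0DY.
case=> [[X' /step_par_inv [[D' /step_con_inv [R DR D'R] X'D']|[Y' YY' X'Y']] HP']|].
- exists Q0, (Par R Y); split=> //; split.
    exact: st_sc Q0DY (st_parl _ (st_rule DR)) (sc_refl _).
  split=> //; apply: extra_thread_after_D DR W_W _.
  exact: sc_trans HP' (sc_par (sc_trans X'D' (sc_par D'R (sc_refl _))) (sc_refl _)).
- exists Q0, (Par D Y'); split=> //; split.
    exact: st_sc Q0DY (st_parr _ YY') (sc_refl _).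
  split=> //; right; left; exists Y', W; split=> //.
    exact: sc_trans HP' (sc_par X'Y' (sc_refl _)).
  exact: mutual_reach_sc (sc_refl _).
move=> [S' /step_seq_con_inv [R WR S'R] HP'].
have DYW : reach (Par D Y) (Par (Par D Y) (Con W)) := reach_hub_par _ (reach_D_W W_W).
have [Q1 QQ1 Q1DYW] := reach_trans (proj1 HQ) DYW.
exists Q1, (Par (Par D Y) R); split=> //; split.
  exact: st_sc Q1DYW (st_parr _ (st_rule WR)) (sc_refl _).
split; last exact: extra_thread_after_W WR W_W (sc_trans HP' (sc_par (sc_refl _) S'R)).
right; left; exists Y, W; split=> //.
exact: mutual_reach_trans (mutual_reach_sc Q1DYW)
  (mutual_reach_sym (mutual_reach_hub DYW (W_vanishes W_W))).
Qed.

Lemma extra_thread_rel_bisim : branching_bisimulation u v extra_thread_rel.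
Proof.
apply: branching_bisimulation_sym.
  by move=> P Q [/mutual_reach_sym|[]]; [left | right; right | right; left].
move=> P Q PQ l P' PP'; left.
have mutual_case Q1 : reach Q1 P -> exists Q'' Q', taus Q1 Q'' /\ step Q'' l Q' /\
    extra_thread_rel P Q'' /\ extra_thread_rel P' Q'.
  move=> /reach_transfer /(_ PP') [Q'' [Q' [? [? [? ?]]]]].
  by exists Q'', Q'; do 2 (split=> //); split; left.
case: PQ => [[_ QP]|[PQ|/extra_thread_reach QP]]; last exact: mutual_case.
  exact: mutual_case.
exact: extra_thread_transfer PQ PP'.
Qed.

Lemma bbisim_extra_thread (W : constant) (X : process) :
  isW W -> sc X (Pc L) -> bbisim u v (Par D X) (Par D (Seq (Con W) X)).
Proof.
move=> W_W XL; exists extra_thread_rel; split; first exact: extra_thread_rel_bisim.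
right; right; exists Eps, W; split=> //.
  exact: sc_par (sc_sym (sc_par1r _)) (sc_seq (sc_refl _) XL).
apply: mutual_reach_trans (mutual_reach_sc (sc_par (sc_refl _) XL)) _.
apply: mutual_reach_trans (mutual_reach_sym (mutual_reach_hub D_L L_vanishes)) _.
exact: mutual_reach_sc (sc_sym (sc_par1r _)).
Qed.

End ExtraThread.


(** * The three families of equivalences *)

Lemma Pu_Pc (ks : seq 'I_n) : Pu Sigma ks = Pc (map (@cU Sigma n) ks).
Proof. by rewrite /Pu /Pc -map_comp. Qed.

Lemma Pv_Pc (ks : seq 'I_n) : Pv Sigma ks = Pc (map (@cV Sigma n) ks).
Proof. by rewrite /Pv /Pc -map_comp. Qed.

Lemma reach_seq_Z (X : process) : reach (Seq (Con cZ) X) X.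
Proof. exact: reach_scr (reach_seq _ (const_vanishes (c := cZ) I)) (sc_seq1l _). Qed.

Lemma bbisim_D_family (pu pv : seq 'I_n) (W : constant) : isW W ->
  let PU := Pu Sigma pu in let PV := Pv Sigma pv in
  let bs := bbisim u v in
  bs D (Par D (Seq (Con cGu) PU))
  /\ bs (Par D (Seq (Con cGu) PU)) (Par D (Seq (Con cGv') (Seq PV PU)))
  /\ bs (Par D (Seq (Con cGv') (Seq PV PU))) (Par D (Seq (Con cZ) (Seq PV PU)))
  /\ bs (Par D (Seq (Con cZ) (Seq PV PU))) (Par D (Seq PV PU))
  /\ bs (Par D (Seq PV PU)) (Par D (Seq (Con W) (Seq PV PU))).
Proof.
move=> W_W PU PV bs; rewrite {}/bs {}/PU {}/PV Pu_Pc Pv_Pc.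
set LU := map _ pu; set LV := map _ pv.
have PU0 : reach (Pc LU) Eps by apply: Pc_vanishes; apply: allc_map.
have PVU0 : reach (Seq (Pc LV) (Pc LU)) Eps.
  by apply: reach_seq_eps PU0; apply: Pc_vanishes; apply: allc_map.
have D_Gu : reach D (Par D (Seq (Con cGu) (Pc LU))).
  apply: reach_hub_trans (reach_rule (r_D1 _ _)) (reach_generate _).
  by apply: allc_map => k; exact: r_Gu1.
have D_Gv' : reach D (Par D (Seq (Con cGv') (Seq (Pc LV) (Pc LU)))).
  apply: reach_hub_trans D_Gu (reach_trans (reach_seq _ (reach_rule (r_Gu3 _ _))) _).
  apply: reach_scr (reach_seq _ (reach_generate _)) (sc_sym (sc_seqA _ _ _)).
  by apply: allc_map => k; exact: r_Gv'1.
have D_Z := reach_hub_trans D_Gv' (reach_seq _ (reach_rule (r_Gv'2 _ _))).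
have D_VU := reach_hub_trans D_Z (reach_seq_Z _).
have Gu0 := seq_vanishes (c := cGu) I PU0.
have Gv'0 := seq_vanishes (c := cGv') I PVU0.
have Z0 := seq_vanishes (c := cZ) I PVU0.
split; first exact: bbisim_mutual_reach (mutual_reach_hub D_Gu Gu0).
split; first exact: bbisim_hub D_Gu Gu0 D_Gv' Gv'0.
split; first exact: bbisim_hub D_Gv' Gv'0 D_Z Z0.
split; first exact: bbisim_hub D_Z Z0 D_VU PVU0.
apply: (bbisim_extra_thread (L := LV ++ LU)) W_W (sc_sym (Pc_cat _ _)).
- by apply: allc_cat; apply: allc_map.
- exact: reach_scr D_VU (sc_par (sc_refl _) (sc_sym (Pc_cat _ _))).
Qed.

Lemma bbisim_C_family (p : seq constant) (pv : seq 'I_n) (W : constant) :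
  allc (@isUV Sigma n) p -> isW W ->
  let PP := Pc p in let PV := Pv Sigma pv in
  let bs := bbisim u v in
  bs C (Par C (Seq (Con cG) PP))
  /\ bs (Par C (Seq (Con cG) PP)) (Par C PP)
  /\ bs (Par C PP) (Par C (Seq (Con W) PP))
  /\ bs (Par C (Seq (Con W) PP)) (Par C (Seq (Con cGv) PV)).
Proof.
move=> p_UV W_W PP PV bs; rewrite {}/bs {}/PP {}/PV Pv_Pc.
have P0 : reach (Pc p) Eps := Pc_vanishes (allc_sub UV_vanishing p_UV).
have PV0 : reach (Pc (map (@cV Sigma n) pv)) Eps by apply: Pc_vanishes; apply: allc_map.
have C_G : reach C (Par C (Seq (Con cG) (Pc p))).
  exact: reach_hub_trans (reach_rule (r_C3 _ _)) (reach_generate (allc_sub rule_G_UV p_UV)).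
have C_P := reach_hub_trans C_G (reach_scr (reach_seq _ (reach_rule (r_G3 _ _))) (sc_seq1l _)).
have C_W := reach_C_W W_W p_UV.
have C_Gv : reach C (Par C (Seq (Con cGv) (Pc (map (@cV Sigma n) pv)))).
  apply: reach_hub_trans (reach_rule (r_C4 _ _)) (reach_generate _).
  by apply: allc_map => k; exact: r_Gv1.
have G0 := seq_vanishes (c := cG) I P0.
have W0 := seq_vanishes (W_vanishing W_W) P0.
have Gv0 := seq_vanishes (c := cGv) I PV0.
split; first exact: bbisim_mutual_reach (mutual_reach_hub C_G G0).
split; first exact: bbisim_hub C_G G0 C_P P0.
split; first exact: bbisim_hub C_P P0 C_W W0.
exact: bbisim_hub C_W W0 C_Gv Gv0.
Qed.

Lemma bbisim_C'_family (q : seq constant) :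
  allc (fun c => isUV c \/ isW c) q ->
  let QQ := Pc q in let C' := Con (@cC' Sigma n) in
  let bs := bbisim u v in
  bs C' (Par C' (Seq (Con cG') QQ))
  /\ bs (Par C' (Seq (Con cG') QQ)) (Par C' (Seq (Con cGv) QQ))
  /\ bs (Par C' (Seq (Con cGv) QQ)) (Par C' (Seq (Con cZ) QQ))
  /\ bs (Par C' (Seq (Con cZ) QQ)) (Par C' QQ).
Proof.
move=> q_UVW QQ C' bs; rewrite {}/bs {}/QQ {}/C'.
have Q0 : reach (Pc q) Eps.
  by apply: Pc_vanishes (allc_sub _ q_UVW) => c [/UV_vanishing|/W_vanishing].
have C'_G' : reach (Con cC') (Par (Con cC') (Seq (Con cG') (Pc q))).
  exact: reach_hub_trans (reach_rule (r_C'1 _ _)) (reach_generate (allc_sub rule_G'_UVW q_UVW)).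
have C'_Gv := reach_hub_trans C'_G' (reach_seq _ (reach_rule (r_G'4 _ _))).
have C'_Z := reach_hub_trans C'_G' (reach_seq _ (reach_rule (r_G'5 _ _))).
have C'_Q := reach_hub_trans C'_Z (reach_seq_Z _).
have G'0 := seq_vanishes (c := cG') I Q0.
have Gv0 := seq_vanishes (c := cGv) I Q0.
have Z0 := seq_vanishes (c := cZ) I Q0.
split; first exact: bbisim_mutual_reach (mutual_reach_hub C'_G' G'0).
split; first exact: bbisim_hub C'_G' G'0 C'_Gv Gv0.
split; first exact: bbisim_hub C'_Gv Gv0 C'_Z Z0.
exact: bbisim_hub C'_Z Z0 C'_Q Q0.
Qed.

End ProcessAlgebraG.

Theorem corollary1 (Sigma : finType) (n : nat) (u v : 'I_n -> seq Sigma) :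
  2 <= #|Sigma| ->
  (forall k, u k <> [::]) -> (forall k, v k <> [::]) ->
  forall (pu pv : seq 'I_n) (p q : seq (const Sigma n)) (W : const Sigma n),
  allc (@isUV Sigma n) p ->
  allc (fun c => isUV c \/ isW u v c) q ->
  isW u v W ->
  let bs := bbisim u v in
  let PU := Pu Sigma pu in
  let PV := Pv Sigma pv in
  let PP := Pc p in
  let QQ := Pc q in
  (* (1) *)
  (bs (Con cD) (Par (Con cD) (Seq (Con cGu) PU))
   /\ bs (Par (Con cD) (Seq (Con cGu) PU)) (Par (Con cD) (Seq (Con cGv') (Seq PV PU)))
   /\ bs (Par (Con cD) (Seq (Con cGv') (Seq PV PU))) (Par (Con cD) (Seq (Con cZ) (Seq PV PU)))
   /\ bs (Par (Con cD) (Seq (Con cZ) (Seq PV PU))) (Par (Con cD) (Seq PV PU))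
   /\ bs (Par (Con cD) (Seq PV PU)) (Par (Con cD) (Seq (Con W) (Seq PV PU))))
  /\
  (* (2) *)
  (bs (Con cC) (Par (Con cC) (Seq (Con cG) PP))
   /\ bs (Par (Con cC) (Seq (Con cG) PP)) (Par (Con cC) PP)
   /\ bs (Par (Con cC) PP) (Par (Con cC) (Seq (Con W) PP))
   /\ bs (Par (Con cC) (Seq (Con W) PP)) (Par (Con cC) (Seq (Con cGv) PV)))
  /\
  (* (3) *)
  (bs (Con cC') (Par (Con cC') (Seq (Con cG') QQ))
   /\ bs (Par (Con cC') (Seq (Con cG') QQ)) (Par (Con cC') (Seq (Con cGv) QQ))
   /\ bs (Par (Con cC') (Seq (Con cGv) QQ)) (Par (Con cC') (Seq (Con cZ) QQ))
   /\ bs (Par (Con cC') (Seq (Con cZ) QQ)) (Par (Con cC') QQ)).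
Proof.
move=> _ _ _ pu pv p q W p_UV q_UVW W_W /=.
split; first exact: bbisim_D_family.
split; first exact: bbisim_C_family.
exact: bbisim_C'_family.
Qed.
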